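(* In the full-information setting, run Gaptron with gap map $a(\mathbf W_t,\mathbf x_t)=(1-\min\{1,m_t^\star\})^2$, learning rate $\eta=\frac{1}{4KX^2}$, exploration rate $\gamma=0$, and the smooth multiclass hinge loss $$\ell_t(\mathbf W)=\begin{cases}\max\{1-2m_t(\mathbf W,y_t),0\}&\text{if } m_t(\mathbf W,y_t)\le 0,\\ \max\{(1-m_t(\mathbf W,y_t))^2,0\}&\text{if } m_t(\mathbf W,y_t)>0.\end{cases}$$ Then for every $\mathbf U\in\mathcal W$, $$\mathbb E\Big[\sum_{t=1}^T\mathbb 1[y'_t\ne y_t]\Big]\le\sum_{t=1}^T\ell_t(\mathbf U)+2KX^2\|\mathbf U\|^2.$$
   Context: Setting and notation. Fix integers $K\ge 2$, $d\ge1$, $T\ge1$ and reals $X>0$, $D>0$. Matrices $\mathbf W\in\mathbb{R}^{K\times d}$ have rows $\mathbf W^1,\dots,\mathbf W^K\in\mathbb{R}^d$ and are identified with vectors in $\mathbb{R}^{Kd}$; $\langle\cdot,\cdot\rangle$ is the Euclidean inner product and $\|\cdot\|$ the Euclidean (Frobenius) norm. $\mathcal W=\{\mathbf W:\|\mathbf W\|\le D\}$. $\mathbf e_k$ is the $k$-th standard basis vector of $\mathbb R^K$ and $\mathbf 1\in\mathbb R^K$ the all-ones vector. In each round $t=1,\dots,T$ the environment chooses a label $y_t\in\{1,\dots,K\}$ and a feature vector $\mathbf x_t\in\mathbb R^d$ with $\|\mathbf x_t\|\le X$ (possibly depending on the learner's past predictions $y'_1,\dots,y'_{t-1}$ but not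 on its current random draw); the learner sees $\mathbf x_t$, outputs a random label $y'_t$, and then observes $y_t$ (full-information setting) or only $\mathbb 1[y'_t\ne y_t]$ (bandit setting). Gaptron, with learning rate $\eta>0$, exploration rate $\gamma\in[0,1]$, gap map $a:\mathbb R^{K\times d}\times\mathbb R^d\to[0,1]$ and loss functions $\ell_t$: set $\mathbf W_1=\mathbf 0$; for $t=1,\dots,T$: let $y_t^\star=\arg\max_k\langle \mathbf W_t^k,\mathbf x_t\rangle$ (ties broken arbitrarily), $a_t=a(\mathbf W_t,\mathbf x_t)$, $\mathbf p'_t=(1-\max\{a_t,\gamma\})\mathbf e_{y_t^\star}+\max\{a_t,\gamma\}\frac1K\mathbf 1$; draw $y'_t\sim\mathbf p'_t$ ($p'_t(k)$ denotes the probability of label $k$); set $\mathbf g_t=\nabla\ell_t(\mathbf W_t)$; update $\mathbf W_{t+1}=\arg\min_{\mathbf W\in\mathcal W}\ \eta\langle\mathbf g_t,\mathbf W\rangle+\frac12\|\mathbf W-\mathbf W_t\|^2$. $\mathbb E$ denotes expectation over the learner's randomization. Margins: $m_t(\mathbf W,y)=\langle\mathbf W^y,\mathbf x_t\rangle-\max_{k\ne y}\langle\mathbf W^k,\mathbf x_t\rangle$ and $m_t^\star=\max_k m_t(\mathbf W_t,k)$, where $\mathbf W_t$ is Gaptron's current iterate. *)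

From HB Require Import structures.
From mathcomp Require Import all_boot all_order all_algebra.
From mathcomp Require Import reals.
Set Implicit Arguments. Unset Strict Implicit. Unset Printing Implicit Defensive.
Import Order.TTheory GRing.Theory Num.Theory.
Local Open Scope ring_scope.

Section Gaptron.
Variables (R : realType) (K d : nat).
Local Notation Mat := 'M[R]_(K, d).
Local Notation Vec := 'rV[R]_d.

Definition minner (A B : Mat) : R := \sum_(i < K) \sum_(j < d) A i j * B i j.
Definition mnorm (A : Mat) : R := Num.sqrt (minner A A).
Definition vnorm (x : Vec) : R := Num.sqrt (\sum_(j < d) x 0 j ^+ 2).

Definition score (W : Mat) (x : Vec) (k : 'I_K) : R := \sum_(j < d) W k j * x 0 j.

(* a lower bound for all scores, used only as the neutral start of the
   max over k != y (which is a nonempty index set when K >= 2) *)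
Definition score_lo (W : Mat) (x : Vec) : R := \big[Num.min/0]_(k < K) score W x k.

Definition margin (W : Mat) (x : Vec) (y : 'I_K) : R :=
  score W x y - \big[Num.max/(score_lo W x)]_(k < K | k != y) score W x k.

Definition mstar (W : Mat) (x : Vec) : R :=
  \big[Num.max/(\big[Num.min/0]_(k < K) margin W x k)]_(k < K) margin W x k.

Definition smooth_hinge (W : Mat) (x : Vec) (y : 'I_K) : R :=
  let m := margin W x y in
  if m <= 0 then Num.max (1 - 2 * m) 0 else (Num.max (1 - m) 0) ^+ 2.

(* derivative of the scalar loss as a function of the margin *)
Definition dhinge (m : R) : R := if m <= 0 then -2 else - 2 * Num.max (1 - m) 0.

(* gradient of the smooth hinge at W, where ky is the maximizer of
   <W^k,x> over k <> y used to differentiate the inner max *)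
Definition hinge_grad (W : Mat) (x : Vec) (y ky : 'I_K) : Mat :=
  \matrix_(i < K, j < d)
     (dhinge (margin W x y) * (((i == y)%:R - (i == ky)%:R) * x 0 j)).

Definition gap (W : Mat) (x : Vec) : R := (1 - Num.min 1 (mstar W x)) ^+ 2.

Definition gprob (gamma : R) (pick : Mat -> Vec -> 'I_K) (W : Mat) (x : Vec)
    (k : 'I_K) : R :=
  (1 - Num.max (gap W x) gamma) * (k == pick W x)%:R
  + Num.max (gap W x) gamma / K%:R.

Definition is_proj_step (eta D : R) (step : Mat -> Mat -> Mat) : Prop :=
  forall W g, mnorm (step W g) <= D /\
    forall V, mnorm V <= D ->
      eta * minner g (step W g) + 2^-1 * mnorm (step W g - W) ^+ 2
      <= eta * minner g V + 2^-1 * mnorm (V - W) ^+ 2.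

Variables (adv : seq 'I_K -> 'I_K * Vec)
  (pick : Mat -> Vec -> 'I_K) (sel : Mat -> Vec -> 'I_K -> 'I_K)
  (step : Mat -> Mat -> Mat).

(* Histories of past predictions are stored most recent first.
   adv h = (y_t, x_t) is the environment's choice after the learner's
   predictions h = [y'_{t-1}; ...; y'_1]. *)
Fixpoint Wst (h : seq 'I_K) : Mat :=
  match h with
  | [::] => 0
  | _ :: h' =>
      let W := Wst h' in
      let yx := adv h' in
      step W (hinge_grad W yx.2 yx.1 (sel W yx.2 yx.1))
  end.

Fixpoint Expect (gamma : R) (h : seq 'I_K) (n : nat) (f : seq 'I_K -> R) : R :=
  match n with
  | 0 => f h
  | n'.+1 => \sum_(k < K)
      gprob gamma pick (Wst h) (adv h).2 k * Expect gamma (k :: h) n' f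
  end.

Fixpoint cumul (g : seq 'I_K -> 'I_K -> R) (h : seq 'I_K) : R :=
  match h with
  | [::] => 0
  | k :: h' => g h' k + cumul g h'
  end.

Definition mistakes (h : seq 'I_K) : R :=
  cumul (fun h' k => (k != (adv h').1)%:R) h.

Definition cum_loss (U : Mat) (h : seq 'I_K) : R :=
  cumul (fun h' _ => smooth_hinge U (adv h').2 (adv h').1) h.

End Gaptron.

From HB Require Import structures.
From mathcomp Require Import all_boot all_order all_algebra.
From mathcomp Require Import reals.
From mathcomp Require Import ring lra.
Import Order.TTheory GRing.Theory Num.Theory.
Set Implicit Arguments. Unset Strict Implicit.
Local Open Scope ring_scope.

(* The proof is a potential argument.  With c = 2KX^2 = 1/(2 eta) and
   Z_t = #mistakes - sum_s ell_s(U) + c |U - W_t|^2 we show that Z is a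
   supermartingale along the learner's random predictions, so
   E[Z_T] <= Z_1 = c |U|^2, which is the claim since |U - W_T|^2 >= 0.
   The one-round decrease combines four facts, developed in this order:
   - geometry of the Frobenius inner product and the standard one-step bound
     of projected online gradient descent onto a ball;
   - margins: the gradient of the loss acts through the score gap to the
     best competitor, so ell(W) - ell(U) <= <g, W - U> by convexity, and
     |g|^2 <= 2 dhinge(m)^2 X^2;
   - a scalar inequality: the probability of a mistake plus the gradient term
     dhinge(m)^2/(4K) is at most the hinge loss at the true margin m;
   - generic properties of the expectation over prediction histories
     (linearity, monotonicity, the supermartingale bound). *)

(* A quadratic s*c1 + s^2/2*c2 (with c2 >= 0) that is nonnegative for all
   small s in (0,1] has a nonnegative slope c1: this is the first-order
   optimality condition behind the projected gradient step. *)
Lemma slope_ge0_of_quadratic (R : realFieldType) (c1 c2 : R) : 0 <= c2 ->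
  (forall s, 0 < s -> s <= 1 -> 0 <= s * c1 + s ^+ 2 / 2 * c2) -> 0 <= c1.
Proof.
move=> c2_ge0 hquad; rewrite leNgt; apply/negP => c1_lt0.
have den_gt0 : 0 < c2 - c1 by lra.
pose s := - c1 / (c2 - c1).
have s_gt0 : 0 < s by apply: divr_gt0; lra.
have s_le1 : s <= 1 by rewrite ler_pdivrMr // mul1r; lra.
have es : s * c2 = - c1 + s * c1.
  have : s * (c2 - c1) = - c1 by rewrite /s divfK //; lra.
  lra.
have value : s * c1 + s ^+ 2 / 2 * c2 = (s * c1 + s * (s * c1)) / 2.
  have -> : s ^+ 2 / 2 * c2 = s * (s * c2) / 2 by ring.
  by rewrite es; field.
have : s * c1 < 0 by rewrite pmulr_rlt0.
have : s * (s * c1) < 0 by rewrite pmulr_rlt0 // pmulr_rlt0.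
have := hquad s s_gt0 s_le1; rewrite value; lra.
Qed.

Section FrobeniusGeometry.
Variables (R : realType) (K d : nat).
Local Notation Mat := 'M[R]_(K, d).

Lemma minnerC (A B : Mat) : minner A B = minner B A.
Proof. by apply: eq_bigr => i _; apply: eq_bigr => j _; rewrite mulrC. Qed.

Lemma minnerDl (A B C : Mat) : minner (A + B) C = minner A C + minner B C.
Proof.
rewrite /minner -big_split; apply: eq_bigr => i _.
by rewrite -big_split; apply: eq_bigr => j _; rewrite mxE mulrDl.
Qed.

Lemma minnerZl (s : R) (A C : Mat) : minner (s *: A) C = s * minner A C.
Proof.
rewrite /minner mulr_sumr; apply: eq_bigr => i _.
by rewrite mulr_sumr; apply: eq_bigr => j _; rewrite mxE mulrA.
Qed.

Lemma minnerNl (A C : Mat) : minner (- A) C = - minner A C.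
Proof. by rewrite -scaleN1r minnerZl mulN1r. Qed.

Lemma minnerDr (A B C : Mat) : minner C (A + B) = minner C A + minner C B.
Proof. by rewrite minnerC minnerDl !(minnerC C). Qed.

Lemma minnerZr (s : R) (A C : Mat) : minner C (s *: A) = s * minner C A.
Proof. by rewrite minnerC minnerZl minnerC. Qed.

Lemma minnerNr (A C : Mat) : minner C (- A) = - minner C A.
Proof. by rewrite minnerC minnerNl minnerC. Qed.

Definition minnerE := (minnerDl, minnerDr, minnerZl, minnerZr, minnerNl, minnerNr).

Lemma minner_sqrD (A B : Mat) :
  minner (A + B) (A + B) = minner A A + 2 * minner A B + minner B B.
Proof. rewrite !minnerE (minnerC B A); ring. Qed.

Lemma minner_ge0 (A : Mat) : 0 <= minner A A.
Proof. by apply: sumr_ge0 => i _; apply: sumr_ge0 => j _; rewrite -expr2 sqr_ge0. Qed.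

Lemma mnorm_sq (A : Mat) : mnorm A ^+ 2 = minner A A.
Proof. by rewrite sqr_sqrtr ?minner_ge0. Qed.

Lemma mnorm_le (A : Mat) (D : R) : 0 <= D -> (mnorm A <= D) = (minner A A <= D ^+ 2).
Proof. by move=> D_ge0; rewrite -mnorm_sq ler_pXn2r ?nnegrE ?sqrtr_ge0. Qed.

(* The ball {A : mnorm A <= D} is convex: the squared norm of a convex
   combination is below the combination of squared norms, the defect being
   s(1-s)|A-B|^2. *)
Lemma ball_convex (D s : R) (A B : Mat) : 0 <= s <= 1 ->
  mnorm A <= D -> mnorm B <= D -> mnorm ((1 - s) *: A + s *: B) <= D.
Proof.
move=> /andP[s_ge0 s_le1] hA hB.
have D_ge0 : 0 <= D by apply: le_trans hA; rewrite sqrtr_ge0.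
move: hA hB; rewrite !mnorm_le // => hA hB.
have defect : minner ((1 - s) *: A + s *: B) ((1 - s) *: A + s *: B)
    = (1 - s) * minner A A + s * minner B B - s * (1 - s) * minner (A - B) (A - B).
  rewrite !minnerE (minnerC B A); ring.
rewrite defect.
have s'_ge0 : 0 <= 1 - s by lra.
have := mulr_ge0 (mulr_ge0 s_ge0 s'_ge0) (minner_ge0 (A - B)).
have : (1 - s) * minner A A <= (1 - s) * D ^+ 2 by apply: ler_wpM2l.
have : s * minner B B <= s * D ^+ 2 by apply: ler_wpM2l.
lra.
Qed.

Section ProjectedStep.
Variables (eta D : R) (step : Mat -> Mat -> Mat).
Hypothesis step_proj : is_proj_step eta D step.

Lemma proj_step_variational (W g U : Mat) : mnorm U <= D ->
  0 <= eta * minner g (U - step W g) + minner (step W g - W) (U - step W g).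
Proof.
move=> hU; have [hW' W'_min] := step_proj W g.
set W' := step W g in hW' W'_min *.
apply: (slope_ge0_of_quadratic (minner_ge0 (U - W'))) => s s_gt0 s_le1.
have hV : mnorm ((1 - s) *: W' + s *: U) <= D.
  by apply: ball_convex => //; rewrite ltW.
have eV : (1 - s) *: W' + s *: U = W' + s *: (U - W').
  by rewrite scalerBr scalerBl scale1r addrAC addrA.
have eVW : W' + s *: (U - W') - W = (W' - W) + s *: (U - W') by rewrite addrAC.
have lin : minner g (W' + s *: (U - W')) = minner g W' + s * minner g (U - W').
  by rewrite minnerDr minnerZr.
have quad : minner (W' - W + s *: (U - W')) (W' - W + s *: (U - W'))
    = minner (W' - W) (W' - W) + 2 * s * minner (W' - W) (U - W')
      + s ^+ 2 * minner (U - W') (U - W').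
  rewrite minner_sqrD minnerZr minnerZl minnerZr; ring.
have := W'_min _ hV; rewrite eV !mnorm_sq eVW lin quad.
lra.
Qed.

Lemma proj_step_descent (W g U : Mat) : mnorm U <= D ->
  eta * minner g (W - U) <= 2^-1 * minner (U - W) (U - W)
    - 2^-1 * minner (U - step W g) (U - step W g) + eta ^+ 2 / 2 * minner g g.
Proof.
move=> hU; have hvar := proj_step_variational W g hU.
set W' := step W g in hvar *.
have three_point : minner (U - W) (U - W) = minner (U - W') (U - W')
    + 2 * minner (W' - W) (U - W') + minner (W' - W) (W' - W).
  have -> : U - W = (U - W') + (W' - W) by rewrite addrA subrK.
  rewrite minner_sqrD (minnerC (U - W')); ring.
have young_ineq := minner_ge0 (eta *: g + (W' - W)).
have split_g : minner g (W - U) = - minner g (U - W') - minner g (W' - W).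
  rewrite -!minnerNr -minnerDr; congr minner; rewrite !opprB.
  by rewrite [RHS]addrC addrA subrK.
rewrite minner_sqrD !minnerZl !minnerZr in young_ineq.
rewrite split_g three_point; nra.
Qed.

End ProjectedStep.
End FrobeniusGeometry.

Section ScoresAndMargins.
Variables (R : realType) (K d : nat).
Local Notation Mat := 'M[R]_(K, d).
Implicit Types (W : Mat) (x : 'rV[R]_d) (y k p : 'I_K).

Lemma sum_indicator (y : 'I_K) (F : 'I_K -> R) : \sum_i (i == y)%:R * F i = F y.
Proof.
rewrite (bigD1 y) //= eqxx mul1r big1 ?addr0 // => i /negbTE ->.
by rewrite mul0r.
Qed.

Lemma scoreB (A B : Mat) x k : score (A - B) x k = score A x k - score B x k.
Proof. by rewrite /score -sumrB; apply: eq_bigr => j _; rewrite !mxE mulrBl. Qed.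

Lemma margin_le W x y k : k != y -> margin W x y <= score W x y - score W x k.
Proof.
by move=> k_neq_y; rewrite lerD2l lerN2 (le_bigmax_cond _ (score W x) k_neq_y).
Qed.

Lemma margin_best_competitor W x y k0 : k0 != y ->
  (forall k, k != y -> score W x k <= score W x k0) ->
  margin W x y = score W x y - score W x k0.
Proof.
move=> k0_neq_y k0_best; congr (_ - _); apply/le_anti/andP; split.
  by apply: bigmax_le => //; apply: bigmin_le.
exact: (le_bigmax_cond _ (score W x) k0_neq_y).
Qed.

Section Maximizer.
Variables (W : Mat) (x : 'rV[R]_d) (p : 'I_K).
Hypothesis p_max : forall k, score W x k <= score W x p.

Lemma margin_maximizer_ge0 : 0 <= margin W x p.
Proof. by rewrite subr_ge0; apply: bigmax_le => //; apply: bigmin_le. Qed.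

Lemma margin_pos_maximizer y : 0 < margin W x y -> y = p.
Proof.
move=> m_gt0; case: (eqVneq y p) => // y_neq_p.
have p_neq_y : p != y by rewrite eq_sym.
have m_le := margin_le W x p_neq_y; have y_le := p_max y; exfalso; lra.
Qed.

End Maximizer.

Lemma mstar_ge W x k : margin W x k <= mstar W x.
Proof. exact: le_bigmax. Qed.

Lemma mstar_ge0 W x p : (forall k, score W x k <= score W x p) -> 0 <= mstar W x.
Proof. by move=> p_max; apply: le_trans (mstar_ge W x p); apply: margin_maximizer_ge0. Qed.

Lemma mstar_le_neg_margin W x y : margin W x y <= 0 -> mstar W x <= - margin W x y.
Proof.
move=> m_le0; apply: bigmax_le => [|k _].
  by apply: le_trans (bigmin_le 0 y (margin W x)) _; lra.
case: (eqVneq k y) => [->|k_neq_y]; first lra.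
have y_neq_k : y != k by rewrite eq_sym.
apply: le_trans (margin_le W x y_neq_k) _.
by rewrite /margin opprB lerD2r (le_bigmax_cond _ (score W x) k_neq_y).
Qed.

Lemma minner_hinge_grad W (V : Mat) x y ky :
  minner (hinge_grad W x y ky) V =
  dhinge (margin W x y) * (score V x y - score V x ky).
Proof.
set c := dhinge _.
transitivity (\sum_i c * ((i == y)%:R * score V x i - (i == ky)%:R * score V x i)).
  apply: eq_bigr => i _; rewrite /score !mulr_sumr -sumrB mulr_sumr.
  by apply: eq_bigr => j _; rewrite mxE -/c; ring.
by rewrite -mulr_sumr sumrB !sum_indicator.
Qed.

Lemma minner_hinge_grad_self W x y ky : ky != y ->
  minner (hinge_grad W x y ky) (hinge_grad W x y ky) =
  2 * dhinge (margin W x y) ^+ 2 * \sum_j x 0 j ^+ 2.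
Proof.
move=> ky_neq_y; rewrite minner_hinge_grad /score.
have gap_y : \sum_j hinge_grad W x y ky y j * x 0 j
    = dhinge (margin W x y) * \sum_j x 0 j ^+ 2.
  rewrite mulr_sumr; apply: eq_bigr => j _.
  by rewrite mxE eqxx eq_sym (negbTE ky_neq_y) /= subr0; ring.
have gap_ky : \sum_j hinge_grad W x y ky ky j * x 0 j
    = - (dhinge (margin W x y) * \sum_j x 0 j ^+ 2).
  rewrite mulr_sumr -sumrN; apply: eq_bigr => j _.
  by rewrite mxE eqxx (negbTE ky_neq_y) /= sub0r; ring.
by rewrite gap_y gap_ky; ring.
Qed.

Lemma vnorm_sq_le x (X : R) : vnorm x <= X -> \sum_j x 0 j ^+ 2 <= X ^+ 2.
Proof.
move=> hx; have S_ge0 : 0 <= \sum_j x 0 j ^+ 2 by apply: sumr_ge0 => j _; apply: sqr_ge0.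
rewrite -(sqr_sqrtr S_ge0) ler_pXn2r ?nnegrE ?sqrtr_ge0 //.
by apply: le_trans hx; apply: sqrtr_ge0.
Qed.

End ScoresAndMargins.

Section HingeLoss.
Variable R : realType.

Definition hinge (m : R) : R :=
  if m <= 0 then Num.max (1 - 2 * m) 0 else Num.max (1 - m) 0 ^+ 2.

Lemma smooth_hingeE (K d : nat) (W : 'M[R]_(K, d)) x y :
  smooth_hinge W x y = hinge (margin W x y).
Proof. by []. Qed.

Lemma dhinge_le0 (m : R) : dhinge m <= 0.
Proof.
rewrite /dhinge; case: ifP => _; first lra.
have : 0 <= Num.max (1 - m) 0 by rewrite le_max lexx orbT.
lra.
Qed.

Lemma max0_cases (u : R) : (0 <= u /\ Num.max u 0 = u) \/ (u < 0 /\ Num.max u 0 = 0).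
Proof.
by case: (lerP 0 u) => h; [left | right]; split=> //; rewrite ?max_l // ?max_r ?ltW.
Qed.

Lemma hinge_tangent_le (a b : R) : hinge a + dhinge a * (b - a) <= hinge b.
Proof.
rewrite /hinge /dhinge.
case: (lerP a 0) => ha; case: (lerP b 0) => hb;
  case: (max0_cases (1 - 2 * a)) => -[h1 e1]; case: (max0_cases (1 - 2 * b)) => -[h2 e2];
  case: (max0_cases (1 - a)) => -[h3 e3]; case: (max0_cases (1 - b)) => -[h4 e4];
  rewrite ?e1 ?e2 ?e3 ?e4; have := sqr_ge0 (a - b); rewrite !expr2; nra.
Qed.

(* With gap a = (1 - min{1, m*})^2,
   predicting the greedy label (b = [y is greedy]) with probability 1 - a
   and a uniform label (probability iK = 1/K each) with probability a,
   the probability of a mistake plus the gradient-size term dhinge(m)^2/(4K)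
   is at most the hinge loss at the margin m of the true label.  The
   hypotheses encode m <= m*, and that m* <= |m| when m <= 0 and the true
   label is greedy when m > 0. *)
Lemma mistake_plus_gradient_le_hinge (iK m ms a : R) (b : bool) :
  a = (1 - Num.min 1 ms) ^+ 2 ->
  0 < iK <= 1 -> 0 <= ms -> m <= ms -> (m <= 0 -> ms <= - m) -> (0 < m -> b) ->
  1 - ((1 - a) * b%:R + a * iK) + dhinge m ^+ 2 * iK / 4 <= hinge m.
Proof.
move=> a_def /andP[iK_gt0 iK_le1] ms_ge0 m_le_ms neg_case pos_case.
have [c_le1 c_le_ms c_cases] : [/\ Num.min 1 ms <= 1, Num.min 1 ms <= ms &
    Num.min 1 ms = 1 \/ Num.min 1 ms = ms].
  split; [by rewrite ge_min lexx | by rewrite ge_min lexx orbT |].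
  by case: (lerP 1 ms) => h; [left | right].
set c := Num.min 1 ms in a_def c_le1 c_le_ms c_cases.
have c_ge0 : 0 <= c by case: c_cases => ->; lra.
have a_le1 : a <= 1 by rewrite a_def; nra.
have b01 : b%:R = 0 :> R \/ b%:R = 1 :> R by case: (b); [right | left].
rewrite /hinge /dhinge; case: (lerP m 0) => m_sign.
- (* nonpositive margin: mistake probability 1 - a <= -2m *)
  rewrite max_l; last lra.
  have := neg_case m_sign => ms_le.
  have : 1 - a <= - 2 * m by rewrite a_def; nra.
  have : (1 - a) * iK <= 1 - a by nra.
  by case: b01 => ->; nra.
- (* positive margin: y is greedy, mistake probability a(1 - 1/K) *)
  have -> : b%:R = 1 :> R by rewrite (pos_case m_sign).
  have a_le : a <= Num.max (1 - m) 0 ^+ 2.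
    by case: (max0_cases (1 - m)) => -[h ->]; rewrite a_def; case: c_cases => hc; nra.
  have : 0 <= (Num.max (1 - m) 0 ^+ 2 - a) * (1 - iK) by apply: mulr_ge0; lra.
  nra.
Qed.

End HingeLoss.

Section GaptronRound.
Variables (R : realType) (K d : nat) (X : R).
Local Notation Mat := 'M[R]_(K, d).
Hypotheses (K_ge2 : (2 <= K)%N) (X_gt0 : 0 < X).
Variable pick : Mat -> 'rV[R]_d -> 'I_K.
Hypothesis pick_max : forall W x k, score W x k <= score W x (pick W x).

Lemma K_gt0 : (0 : R) < K%:R.
Proof. by rewrite ltr0n; apply: leq_trans K_ge2. Qed.

(* The gap a = (1 - min{1, m*})^2 lies in [0, 1] because m* >= 0. *)
Lemma gap_ge0 (W : Mat) x : 0 <= gap W x.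
Proof. exact: sqr_ge0. Qed.

Lemma gap_le1 (W : Mat) x : gap W x <= 1.
Proof.
have ms_ge0 := mstar_ge0 (pick_max W x).
have : Num.min 1 (mstar W x) <= 1 by rewrite ge_min lexx.
have : 0 <= Num.min 1 (mstar W x) by rewrite le_min ms_ge0 ler01.
rewrite /gap; nra.
Qed.

Lemma gprob0E (W : Mat) x k :
  gprob 0 pick W x k = (1 - gap W x) * (k == pick W x)%:R + gap W x / K%:R.
Proof. by rewrite /gprob max_l ?gap_ge0. Qed.

Lemma gprob0_ge0 (W : Mat) x k : 0 <= gprob 0 pick W x k.
Proof.
rewrite gprob0E; apply: addr_ge0; last by rewrite divr_ge0 ?gap_ge0 ?ler0n.
by apply: mulr_ge0; [rewrite subr_ge0 gap_le1 | case: (k == _)].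
Qed.

Lemma gprob0_sum1 (W : Mat) x : \sum_k gprob 0 pick W x k = 1.
Proof.
under eq_bigr => k _ do rewrite gprob0E mulrC.
rewrite big_split /= sum_indicator sumr_const card_ord -(mulr_natr (gap W x / _)) divfK.
  by rewrite subrK.
by rewrite gt_eqF // K_gt0.
Qed.

Lemma mistake_prob_le_hinge (W : Mat) x y :
  1 - gprob 0 pick W x y + dhinge (margin W x y) ^+ 2 / (4 * K%:R)
    <= hinge (margin W x y).
Proof.
have iK_range : 0 < (K%:R : R)^-1 <= 1.
  rewrite invr_gt0 K_gt0 invf_le1 ?K_gt0 //.
  by rewrite ler1n; apply: leq_trans K_ge2.
have := @mistake_plus_gradient_le_hinge _ _ _ _ (gap W x) (y == pick W x) erefl iK_range
  (mstar_ge0 (pick_max W x)) (mstar_ge W x y) (@mstar_le_neg_margin _ _ _ W x y)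
  (fun m_gt0 => introT eqP (margin_pos_maximizer (pick_max W x) m_gt0)).
suff -> : dhinge (margin W x y) ^+ 2 / (4 * K%:R)
    = dhinge (margin W x y) ^+ 2 * K%:R^-1 / 4.
  by rewrite gprob0E mulrC [gap W x / _]mulrC.
by field; rewrite gt_eqF // K_gt0.
Qed.

(* Linearizing the loss along the hinge gradient (ky a best competitor):
   ell(W) - ell(U) <= <g, W - U>, by convexity of hinge and since the margin
   of U is at most its score gap to ky. *)
Lemma hinge_linearization (W U : Mat) x y ky : ky != y ->
  (forall k, k != y -> score W x k <= score W x ky) ->
  hinge (margin W x y) - hinge (margin U x y)
    <= minner (hinge_grad W x y ky) (W - U).
Proof.
move=> ky_neq_y ky_best.
have mW_eq := margin_best_competitor ky_neq_y ky_best.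
have mU_le := margin_le U x ky_neq_y.
have tangent := hinge_tangent_le (margin W x y) (margin U x y).
have sign : dhinge (margin W x y) * (score U x y - score U x ky - margin U x y) <= 0.
  by rewrite mulr_le0_ge0 ?dhinge_le0 ?subr_ge0.
have dW : dhinge (margin W x y) * margin W x y
    = dhinge (margin W x y) * (score W x y - score W x ky) by rewrite {2}mW_eq.
rewrite minner_hinge_grad !scoreB; lra.
Qed.

Lemma hinge_grad_norm_le (W : Mat) x y ky : ky != y -> vnorm x <= X ->
  minner (hinge_grad W x y ky) (hinge_grad W x y ky)
    <= 2 * dhinge (margin W x y) ^+ 2 * X ^+ 2.
Proof.
move=> ky_neq_y hx; rewrite minner_hinge_grad_self //.
apply: ler_wpM2l; first by rewrite mulr_ge0 ?sqr_ge0.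
exact: vnorm_sq_le.
Qed.

Variables (D : R) (step : Mat -> Mat -> Mat).
Hypothesis step_proj : is_proj_step (1 / (4 * K%:R * X ^+ 2)) D step.

(* One round of Gaptron: with potential c |U - W|^2, c = 2 K X^2, the
   expected mistake minus the comparator's loss is paid for by the decrease
   of the potential.  This combines the gradient-descent step bound, the
   linearization of the loss and the mistake bound. *)
Lemma gaptron_round (W : Mat) x y ky (U : Mat) :
  vnorm x <= X -> ky != y ->
  (forall k, k != y -> score W x k <= score W x ky) -> mnorm U <= D ->
  1 - gprob 0 pick W x y - smooth_hinge U x y
    + 2 * K%:R * X ^+ 2 * minner (U - step W (hinge_grad W x y ky))
                                 (U - step W (hinge_grad W x y ky))
  <= 2 * K%:R * X ^+ 2 * minner (U - W) (U - W).
Proof.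
move=> hx ky_neq_y ky_best hU.
set g := hinge_grad W x y ky; set W' := step W g.
set c := 2 * K%:R * X ^+ 2.
have c4_gt0 : 0 < 4 * K%:R * X ^+ 2 by rewrite !mulr_gt0 ?K_gt0 ?exprn_gt0.
have [K_neq0 X_neq0] : (K%:R : R) != 0 /\ X != 0 by rewrite !gt_eqF ?K_gt0.
have descent : minner g (W - U) <= c * minner (U - W) (U - W)
    - c * minner (U - W') (U - W') + minner g g / (8 * K%:R * X ^+ 2).
  set eta := 1 / (4 * K%:R * X ^+ 2).
  have lhs : 4 * K%:R * X ^+ 2 * (eta * minner g (W - U)) = minner g (W - U).
    by rewrite /eta; field; rewrite X_neq0 K_neq0.
  have rhs : 4 * K%:R * X ^+ 2 * (2^-1 * minner (U - W) (U - W)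
        - 2^-1 * minner (U - W') (U - W') + eta ^+ 2 / 2 * minner g g)
      = c * minner (U - W) (U - W) - c * minner (U - W') (U - W')
        + minner g g / (8 * K%:R * X ^+ 2).
    by rewrite /c /eta; field; rewrite X_neq0 K_neq0.
  rewrite -lhs -rhs; apply: ler_wpM2l; first exact: ltW.
  exact: proj_step_descent.
have linear := hinge_linearization U ky_neq_y ky_best.
have grad_norm : minner g g / (8 * K%:R * X ^+ 2)
    <= dhinge (margin W x y) ^+ 2 / (4 * K%:R).
  rewrite ler_pdivrMr ?mulr_gt0 ?K_gt0 ?exprn_gt0 //.
  have -> : dhinge (margin W x y) ^+ 2 / (4 * K%:R) * (8 * K%:R * X ^+ 2)
      = 2 * dhinge (margin W x y) ^+ 2 * X ^+ 2 by field.
  exact: hinge_grad_norm_le.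
have mistake := mistake_prob_le_hinge W x y.
rewrite smooth_hingeE; lra.
Qed.

End GaptronRound.

Section Expectation.
Variables (R : realType) (K d : nat).
Variables (adv : seq 'I_K -> 'I_K * 'rV[R]_d)
  (pick : 'M[R]_(K, d) -> 'rV[R]_d -> 'I_K)
  (sel : 'M[R]_(K, d) -> 'rV[R]_d -> 'I_K -> 'I_K)
  (step : 'M[R]_(K, d) -> 'M[R]_(K, d) -> 'M[R]_(K, d)) (gamma : R).

Local Notation p h k := (gprob gamma pick (Wst adv sel step h) (adv h).2 k).
Local Notation E := (Expect adv pick sel step gamma).

Hypothesis p_ge0 : forall h k, 0 <= p h k.

Lemma ExpectB h n (F G : seq 'I_K -> R) :
  E h n (fun h' => F h' - G h') = E h n F - E h n G.
Proof.
elim: n h => [|n IH] h //=; rewrite -sumrB.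
by apply: eq_bigr => k _; rewrite IH mulrBr.
Qed.

Lemma Expect_le h n (F G : seq 'I_K -> R) :
  (forall h', F h' <= G h') -> E h n F <= E h n G.
Proof.
move=> FG; elim: n h => [|n IH] h //=.
by apply: ler_sum => k _; apply: ler_wpM2l.
Qed.

Lemma Expect_supermartingale h n (Z : seq 'I_K -> R) :
  (forall h', \sum_k p h' k * Z (k :: h') <= Z h') -> E h n Z <= Z h.
Proof.
move=> Zsuper; elim: n h => [|n IH] h //=.
apply: le_trans (Zsuper h); apply: ler_sum => k _.
by apply: ler_wpM2l.
Qed.

End Expectation.

Section GaptronPotential.
Variables (R : realType) (K d : nat) (X D : R).
Hypotheses (K_ge2 : (2 <= K)%N) (X_gt0 : 0 < X).
Variable adv : seq 'I_K -> 'I_K * 'rV[R]_d.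
Hypothesis adv_bounded : forall h, vnorm (adv h).2 <= X.
Variable pick : 'M[R]_(K, d) -> 'rV[R]_d -> 'I_K.
Hypothesis pick_max : forall W x k, score W x k <= score W x (pick W x).
Variable sel : 'M[R]_(K, d) -> 'rV[R]_d -> 'I_K -> 'I_K.
Hypothesis sel_best : forall W x y, sel W x y != y /\
  forall k, k != y -> score W x k <= score W x (sel W x y).
Variable step : 'M[R]_(K, d) -> 'M[R]_(K, d) -> 'M[R]_(K, d).
Hypothesis step_proj : is_proj_step (1 / (4 * K%:R * X ^+ 2)) D step.
Variable U : 'M[R]_(K, d).
Hypothesis U_in_ball : mnorm U <= D.

Definition gaptron_potential (h : seq 'I_K) : R :=
  mistakes adv h - cum_loss adv U h
  + 2 * K%:R * X ^+ 2 * minner (U - Wst adv sel step h) (U - Wst adv sel step h).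

(* The potential is a supermartingale for Gaptron's predictions: the next
   iterate does not depend on the drawn label (full information), so the
   conditional expectation only averages the mistake indicator. *)
Lemma gaptron_potential_super (h : seq 'I_K) :
  \sum_k gprob 0 pick (Wst adv sel step h) (adv h).2 k * gaptron_potential (k :: h)
    <= gaptron_potential h.
Proof.
set W := Wst adv sel step h; set x := (adv h).2; set y := (adv h).1.
set p := gprob 0 pick W x.
have [ky_neq_y ky_best] := sel_best W x y.
have round := gaptron_round K_ge2 X_gt0 pick_max step_proj
  (adv_bounded h) ky_neq_y ky_best U_in_ball.
rewrite -/x -/p in round.
set rest := mistakes adv h - cum_loss adv U h - smooth_hinge U x y
  + 2 * K%:R * X ^+ 2 * minner (U - step W (hinge_grad W x y (sel W x y)))
                              (U - step W (hinge_grad W x y (sel W x y))).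
have next k : gaptron_potential (k :: h) = 1 - (k == y)%:R + rest.
  rewrite /gaptron_potential /rest /mistakes /cum_loss /= -/W -/x -/y.
  by case: (k == y) => /=; ring.
under eq_bigr => k _ do rewrite next mulrDr mulrBr mulr1.
rewrite big_split sumrB /= -mulr_suml gprob0_sum1 //.
rewrite (eq_bigr (fun k => (k == y)%:R * p k)) => [|k _]; last exact: mulrC.
rewrite sum_indicator mul1r /gaptron_potential /rest -/W; lra.
Qed.

End GaptronPotential.

Unset Implicit Arguments.

Theorem theorem3 (R : realType) (K d T : nat) (X D : R)
  (hK : (2 <= K)%N) (hd : (1 <= d)%N) (hT : (1 <= T)%N)
  (hX : 0 < X) (hD : 0 < D)
  (adv : seq 'I_K -> 'I_K * 'rV[R]_d)
  (hadv : forall h, vnorm (adv h).2 <= X)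
  (pick : 'M[R]_(K, d) -> 'rV[R]_d -> 'I_K)
  (hpick : forall W x k, score W x k <= score W x (pick W x))
  (sel : 'M[R]_(K, d) -> 'rV[R]_d -> 'I_K -> 'I_K)
  (hsel : forall W x y, sel W x y != y /\
            forall k, k != y -> score W x k <= score W x (sel W x y))
  (step : 'M[R]_(K, d) -> 'M[R]_(K, d) -> 'M[R]_(K, d))
  (hstep : is_proj_step (1 / (4 * K%:R * X ^+ 2)) D step)
  (U : 'M[R]_(K, d)) (hU : mnorm U <= D) :
  Expect adv pick sel step 0 [::] T (mistakes adv)
  <= Expect adv pick sel step 0 [::] T (cum_loss adv U)
     + 2 * K%:R * X ^+ 2 * mnorm U ^+ 2.
Proof.
have p_ge0 h k := gprob0_ge0 hpick (Wst adv sel step h) (adv h).2 k.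
have Z_super := gaptron_potential_super hK hX hadv hpick hsel hstep hU.
have Z_final := Expect_supermartingale p_ge0 [::] T Z_super.
set Z := gaptron_potential X adv sel step U in Z_super Z_final.
have Z_ge h : mistakes adv h - cum_loss adv U h <= Z h.
  rewrite lerDl mulr_ge0 ?minner_ge0 //.
  by apply/mulr_ge0/sqr_ge0; apply: mulr_ge0; apply: ler0n.
have Z_start : Z [::] = 2 * K%:R * X ^+ 2 * mnorm U ^+ 2.
  by rewrite /Z /gaptron_potential /mistakes /cum_loss /= !subr0 add0r mnorm_sq.
have := Expect_le p_ge0 [::] T Z_ge; rewrite ExpectB; lra.
Qed.
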